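(* Let $\mathcal F|\mathcal G$ be a biflag of $M$, let $s$ be the number of distinct flats different from $E$ among the flats $F$ of the biflats $F|G\in\mathcal F|\mathcal G$, and let $k\ge0$. (1) If $s+k>r$, then $x_{\mathcal F|\mathcal G}\,\gamma^k=0$ in $A_{M,M^\perp}$. (2) If $s+k=r$ and $\mathcal F$ is not initial, then $x_{\mathcal F|\mathcal G}\,\gamma^k=0$ in $A_{M,M^\perp}$. Here $\mathcal F$ is initial if its $s$ distinct flats different from $E$ have ranks exactly $1,2,\dots,s$ in $M$.
   Context: Let $M$ be a matroid with no loops and no coloops on the ground set $E=\{0,1,\dots,n\}$, of rank $r+1$; $M^\perp$ its dual. A biflat of $M$ is a pair $F|G$ where $F$ is a flat of $M$, $G$ is a flat of $M^\perp$, both are nonempty, they are not both equal to $E$, and $F\cup G=E$. Two biflats $F|G$, $F'|G'$ are compatible if ($F\subseteq F'$ and $G\supseteq G'$) or ($F\supseteq F'$ and $G\subseteq G'$). A biflag is a set of pairwise compatible biflats with $\bigcup_{F|G}(F\cap G)\neq E$. Conormal Chow ring: $S$ is the polynomial ring over $\mathbb R$ in variables $x_{F|G}$, one per biflat; $x_{\mathcal F|\mathcal G}=\prod_{F|G\in\mathcal F|\mathcal G}x_{F|G}$ for a set of biflats. For $i\in E$, $\gamma_i=\sum_{i\in F,\,F\neq E}x_{F|G}$, $\bar\gamma_i=\sum_{i\in G,\,G\neq E}x_{F|G}$. $I$ is generated by the $x_{\mathcal F|\mathcal G}$ for sets of biflats that are not biflags, $J$ by all $\gamma_i-\gamma_j$,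 $\bar\gamma_i-\bar\gamma_j$; $A_{M,M^\perp}=S/(I+J)$, and $\gamma$ is the common class of the $\gamma_i$. *)

From HB Require Import structures.
From mathcomp Require Import all_boot all_order all_algebra.
From mathcomp Require Import reals.
From mathcomp Require Import mpoly.

Set Implicit Arguments.
Unset Strict Implicit.
Unset Printing Implicit Defensive.
Import GRing.Theory.
Local Open Scope ring_scope.

Definition is_matroid_rank (T : finType) (rk : {set T} -> nat) : Prop :=
  [/\ forall A : {set T}, (rk A <= #|A|)%N,
      forall A B : {set T}, A \subset B -> (rk A <= rk B)%N
    & forall A B : {set T}, (rk (A :|: B) + rk (A :&: B) <= rk A + rk B)%N].

Definition dual_rk (T : finType) (rk : {set T} -> nat) (A : {set T}) : nat :=
  (#|A| + rk (~: A) - rk setT)%N.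

Definition flatb (T : finType) (r : {set T} -> nat) (F : {set T}) : bool :=
  [forall x, (x \notin F) ==> (r F < r (x |: F))%N].

Definition no_loops (T : finType) (rk : {set T} -> nat) : Prop :=
  forall x : T, (0 < rk [set x])%N.

Definition no_coloops (T : finType) (rk : {set T} -> nat) : Prop :=
  forall x : T, (0 < dual_rk rk [set x])%N.

Section Conormal.
Variable n : nat.
Local Notation T := 'I_n.+1.
Variable rk : {set T} -> nat.

Definition biflatb (p : {set T} * {set T}) : bool :=
  [&& flatb rk p.1, flatb (dual_rk rk) p.2, p.1 != set0, p.2 != set0,
      ~~ ((p.1 == setT) && (p.2 == setT)) & (p.1 :|: p.2 == setT)].

Definition biflat : finType := {p : {set T} * {set T} | biflatb p}.

Definition bF (b : biflat) : {set T} := (val b).1.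
Definition bG (b : biflat) : {set T} := (val b).2.

Definition compatible (b c : biflat) : bool :=
  ((bF b \subset bF c) && (bG c \subset bG b)) ||
  ((bF c \subset bF b) && (bG b \subset bG c)).

Definition biflagb (X : {set biflat}) : bool :=
  [forall b in X, forall c in X, compatible b c] &&
  (\bigcup_(b in X) (bF b :&: bG b) != setT).

Definition flats_of (X : {set biflat}) : {set {set T}} :=
  [set bF b | b in X] :\ setT.

Definition initial (X : {set biflat}) : bool :=
  perm_eq [seq rk F | F <- enum (flats_of X)] (iota 1 #|flats_of X|).

Variable R : realType.

Definition Sring := {mpoly R[#|biflat|]}.

Definition xv (b : biflat) : Sring := 'X_(enum_rank b).

Definition xS (X : {set biflat}) : Sring := \prod_(b in X) xv b.

Definition gam (i : T) : Sring :=
  \sum_(b : biflat | (i \in bF b) && (bF b != setT)) xv b.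

Definition gambar (i : T) : Sring :=
  \sum_(b : biflat | (i \in bG b) && (bG b != setT)) xv b.

Definition IJgen (p : Sring) : Prop :=
  (exists X : {set biflat}, ~~ biflagb X /\ p = xS X) \/
  (exists i j : T, p = gam i - gam j) \/
  (exists i j : T, p = gambar i - gambar j).

Definition in_ideal (P : Sring -> Prop) (p : Sring) : Prop :=
  exists s : seq (Sring * Sring),
    (forall q, q \in s -> P q.2) /\ p = \sum_(q <- s) q.1 * q.2.

(* p = 0 in A_{M,M^perp} = S/(I+J) *)
Definition zero_in_A (p : Sring) : Prop := in_ideal IJgen p.

(* gamma = common class of the gamma_i; represented by gamma_0 *)
Definition gamma : Sring := gam ord0.

End Conormal.

From HB Require Import structures.
From mathcomp Require Import all_boot all_order all_algebra.
From mathcomp Require Import reals.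
From mathcomp Require Import mpoly.
Set Implicit Arguments.
Unset Strict Implicit.
Unset Printing Implicit Defensive.
Import GRing.Theory.
Local Open Scope ring_scope.

(* For a biflag X write s = #|flats_of X| and let
   maxrank X be the largest rank of a flat in flats_of X (0 if there is none).
   These flats form a chain of distinct nonempty proper flats, so their ranks
   are distinct elements of {1, ..., maxrank X}; hence s <= maxrank X, with
   equality only when X is initial, and maxrank X <= r.  Both claims of the
   theorem therefore follow from the single statement
       r < maxrank X + k  ->  x_X * gamma^k = 0 in A_{M,M^perp},
   proved by induction on k.  For the
   step pick i outside every flat of X; modulo J, gamma = gamma_i, and
   x_X * gamma_i is the sum of the x_{X + b} over the biflats b whose flat is
   proper and contains i.  Each X + b is either not a biflag (a generator of I)
   or a biflag whose new flat strictly contains every flat of X, so that its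
   maxrank is larger and the induction hypothesis applies. *)

Section IdealClosure.
Variables (n : nat) (rk : {set 'I_n.+1} -> nat) (R : realType).
Variable P : Sring rk R -> Prop.

Lemma ideal0 : in_ideal P 0.
Proof. by exists [::]; split => //; rewrite big_nil. Qed.

Lemma idealD p q : in_ideal P p -> in_ideal P q -> in_ideal P (p + q).
Proof.
move=> [s [Ps ->]] [t [Pt ->]]; exists (s ++ t); split; last by rewrite big_cat.
by move=> u; rewrite mem_cat => /orP [/Ps|/Pt].
Qed.

Lemma idealMl c p : in_ideal P p -> in_ideal P (c * p).
Proof.
move=> [s [Ps ->]]; exists [seq (c * u.1, u.2) | u <- s]; split.
  by move=> q /mapP [u su ->]; exact: Ps su.
by rewrite big_map mulr_sumr; apply: eq_bigr => u _; rewrite mulrA.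
Qed.

Lemma idealMr c p : in_ideal P p -> in_ideal P (p * c).
Proof. by rewrite mulrC; apply: idealMl. Qed.

Lemma ideal_gen p : P p -> in_ideal P p.
Proof.
move=> Pp; exists [:: (1, p)]; split; first by move=> u; rewrite inE => /eqP ->.
by rewrite big_seq1 mul1r.
Qed.

Lemma ideal_sum (I : finType) (Q : pred I) (F : I -> Sring rk R) :
  (forall i, Q i -> in_ideal P (F i)) -> in_ideal P (\sum_(i | Q i) F i).
Proof. by move=> PF; apply: big_ind => //; [exact: ideal0 | exact: idealD]. Qed.

End IdealClosure.

Section FlatsOfBiflags.
Variables (n : nat) (rk : {set 'I_n.+1} -> nat) (r : nat).
Hypothesis rk_mono : forall A B : {set 'I_n.+1}, A \subset B -> (rk A <= rk B)%N.
Hypothesis rk_no_loops : no_loops rk.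
Hypothesis rk_setT : rk setT = r.+1.

Lemma flat_rank_lt (F G : {set 'I_n.+1}) :
  flatb rk F -> F \proper G -> (rk F < rk G)%N.
Proof.
move=> /forallP flatF /properP [sFG [x xG xF]].
have /implyP/(_ xF) rkFx := flatF x; apply: leq_trans rkFx (rk_mono _).
by rewrite subUset sub1set xG sFG.
Qed.

Lemma flat_rank_bounds (F : {set 'I_n.+1}) :
  F != setT -> flatb rk F -> F != set0 -> (0 < rk F <= r)%N.
Proof.
move=> FT flatF /set0Pn [x xF]; apply/andP; split.
  by apply: leq_trans (rk_no_loops x) (rk_mono _); rewrite sub1set.
by rewrite -ltnS -rk_setT; apply: flat_rank_lt; rewrite // properT.
Qed.

Lemma mem_flats (X : {set biflat rk}) F :
  F \in flats_of X -> [/\ F != setT, flatb rk F, F != set0 &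
                         exists2 b, b \in X & F = bF b].
Proof.
rewrite !inE => /andP [FT /imsetP [b bX eF]]; rewrite eF in FT *.
by have /andP [flatF /and5P [_ F0 _ _ _]] := valP b; split => //; exists b.
Qed.

Lemma biflag_compatible (X : {set biflat rk}) b c :
  biflagb X -> b \in X -> c \in X -> compatible b c.
Proof. by case/andP => /forall_inP compX _ bX /(forall_inP (compX b bX)). Qed.

Lemma compatible_flats (b c : biflat rk) :
  compatible b c -> (bF b \subset bF c) || (bF c \subset bF b).
Proof. by case/orP => /andP [-> _] //; rewrite orbT. Qed.

Lemma flats_chain (X : {set biflat rk}) F G :
  biflagb X -> F \in flats_of X -> G \in flats_of X ->
  (F \subset G) || (G \subset F).
Proof.
move=> HX /mem_flats [_ _ _ [b bX ->]] /mem_flats [_ _ _ [c cX ->]].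
exact/compatible_flats/(biflag_compatible HX).
Qed.

Lemma flats_rank_inj (X : {set biflat rk}) :
  biflagb X -> {in flats_of X &, injective rk}.
Proof.
move=> HX F G XF XG eq_rk; apply/eqP; apply: contraTT (eqxx (rk F)).
have [_ flatF _ _] := mem_flats XF; have [_ flatG _ _] := mem_flats XG.
rewrite {2}eq_rk neq_ltn => neFG.
case/orP: (flats_chain HX XF XG) => sub; apply/orP; [left | right].
  by apply: flat_rank_lt; rewrite // properEneq neFG sub.
by apply: flat_rank_lt; rewrite // properEneq eq_sym neFG sub.
Qed.

Definition maxrank (X : {set biflat rk}) : nat := \max_(F in flats_of X) rk F.

Lemma maxrank_le_r (X : {set biflat rk}) : (maxrank X <= r)%N.
Proof.
apply/bigmax_leqP => F /mem_flats [FT flatF F0 _].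
by case/andP: (flat_rank_bounds FT flatF F0).
Qed.

Lemma flat_ranks_uniq (X : {set biflat rk}) :
  biflagb X -> uniq [seq rk F | F <- enum (flats_of X)].
Proof.
move=> HX; rewrite map_inj_in_uniq ?enum_uniq //.
by move=> F G; rewrite !mem_enum; apply: flats_rank_inj.
Qed.

Lemma flat_ranks_sub (X : {set biflat rk}) :
  {subset [seq rk F | F <- enum (flats_of X)] <= iota 1 (maxrank X)}.
Proof.
move=> m /mapP [F]; rewrite mem_enum => XF ->.
have [FT flatF F0 _] := mem_flats XF.
rewrite mem_iota add1n ltnS (leq_bigmax_cond F XF) andbT.
by case/andP: (flat_rank_bounds FT flatF F0).
Qed.

Lemma size_flat_ranks (X : {set biflat rk}) :
  size [seq rk F | F <- enum (flats_of X)] = #|flats_of X|.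
Proof. by rewrite size_map cardE. Qed.

Lemma card_flats_le_maxrank (X : {set biflat rk}) :
  biflagb X -> (#|flats_of X| <= maxrank X)%N.
Proof.
move=> HX; rewrite -size_flat_ranks -[maxrank X](size_iota 1).
exact: uniq_leq_size (flat_ranks_uniq HX) (@flat_ranks_sub X).
Qed.

Lemma initial_of_maxrank (X : {set biflat rk}) :
  biflagb X -> maxrank X = #|flats_of X| -> initial X.
Proof.
move=> HX max_eq; apply: uniq_perm (flat_ranks_uniq HX) (iota_uniq _ _) _.
rewrite -max_eq; apply: (uniq_min_size (flat_ranks_uniq HX) (@flat_ranks_sub X) _).2.
by rewrite size_iota size_flat_ranks max_eq.
Qed.

(* Some element of the ground set lies outside every flat of a biflag:
   outside the flat of largest rank, which contains all the others. *)
Lemma exists_outside_flats (X : {set biflat rk}) :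
  biflagb X -> exists i, forall G, G \in flats_of X -> i \notin G.
Proof.
move=> HX; have [-> | [F0 XF0]] := set_0Vmem (flats_of X).
  by exists ord0 => G; rewrite inE.
case: (arg_maxnP rk XF0) => Fm XFm Fm_max.
have [FmT flatFm _ _] := mem_flats XFm.
have /subsetPn [i _ iFm] : ~~ (setT \subset Fm) by rewrite subTset.
exists i => G XG; apply: contra iFm => iG.
case/orP: (flats_chain HX XG XFm) => [/subsetP -> // | sFmG].
have [-> // | neFmG] := eqVneq Fm G.
have /negP[] : ~~ (rk Fm < rk G)%N by rewrite -leqNgt; exact: Fm_max.
apply: flat_rank_lt flatFm _.
by rewrite properEneq neFmG sFmG.
Qed.

(* Adding to a biflag X a biflat whose proper flat contains a point outside
   all flats of X strictly increases maxrank: the new flat strictly contains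
   all the old ones. *)
Lemma maxrank_extend (X : {set biflat rk}) (b : biflat rk) i :
  biflagb (b |: X) -> (forall G, G \in flats_of X -> i \notin G) ->
  i \in bF b -> bF b != setT -> (maxrank X < maxrank (b |: X))%N.
Proof.
move=> HbX outX ib bT.
have XbF : bF b \in flats_of (b |: X) by rewrite !inE bT imset_f ?setU11.
have [_ flatbF bF0 _] := mem_flats XbF.
have rk_pos : (0 < rk (bF b))%N by case/andP: (flat_rank_bounds bT flatbF bF0).
apply: leq_trans (leq_bigmax_cond _ XbF).
rewrite -(prednK rk_pos) ltnS; apply/bigmax_leqP => G XG; rewrite -ltnS prednK //.
have [_ flatG _ [c cX eG]] := mem_flats XG.
have iG := outX G XG; rewrite {G XG}eG in flatG iG *.
apply: flat_rank_lt flatG _; rewrite properEneq.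
have := biflag_compatible HbX (setU11 b X) (setU1r b cX).
case/compatible_flats/orP => [/subsetP /(_ i ib) ic | scb].
  by rewrite ic in iG.
by rewrite scb andbT; apply: contraNneq iG => ->.
Qed.

Variable R : realType.

Lemma xS_mul_gam (X : {set biflat rk}) i :
  (forall G, G \in flats_of X -> i \notin G) ->
  xS R X * gam rk R i =
  \sum_(b : biflat rk | (i \in bF b) && (bF b != setT)) xS R (b |: X).
Proof.
move=> outX; rewrite /gam mulr_sumr; apply: eq_bigr => b /andP [ib bT].
have bX : b \notin X.
  by apply: contraL ib => bX; apply: outX; rewrite !inE bT imset_f.
by rewrite /xS big_setU1 //= mulrC.
Qed.

Lemma maxrank_vanishing k (X : {set biflat rk}) :
  biflagb X -> (r < maxrank X + k)%N -> zero_in_A (xS R X * gamma rk R ^+ k).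
Proof.
elim: k X => [|k IHk] X HX lt_r.
  by move: lt_r; rewrite addn0 ltnNge maxrank_le_r.
have [i outX] := exists_outside_flats HX.
have -> : xS R X * gamma rk R ^+ k.+1 =
    (gamma rk R - gam rk R i) * (xS R X * gamma rk R ^+ k) +
    (xS R X * gam rk R i) * gamma rk R ^+ k.
  by rewrite exprS mulrBl [gam rk R i * _]mulrCA -mulrA subrK mulrCA.
apply: idealD; first by apply/idealMr/ideal_gen; right; left; exists ord0, i.
rewrite xS_mul_gam // mulr_suml; apply: ideal_sum => b /andP [ib bT].
have [HbX | notHbX] := boolP (biflagb (b |: X)); last first.
  by apply/idealMr/ideal_gen; left; exists (b |: X).
apply: IHk => //; apply: leq_trans lt_r _.
by rewrite addnS -addSn leq_add2r (maxrank_extend HbX outX).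
Qed.

End FlatsOfBiflags.

Theorem mainTheorem10 (R : realType) (n r : nat) (rk : {set 'I_n.+1} -> nat) :
  is_matroid_rank rk -> no_loops rk -> no_coloops rk -> rk setT = r.+1 ->
  forall X : {set biflat rk}, biflagb X ->
  forall k : nat,
    ((r < #|flats_of X| + k)%N -> zero_in_A (xS R X * (@gamma n rk R) ^+ k)) /\
    ((#|flats_of X| + k)%N = r -> ~~ initial X ->
       zero_in_A (xS R X * (@gamma n rk R) ^+ k)).
Proof.
move=> [_ rk_mono _] rk_no_loops _ rk_setT X HX k.
have vanish := maxrank_vanishing rk_mono rk_no_loops rk_setT R HX.
have s_le_max := card_flats_le_maxrank rk_mono rk_no_loops rk_setT HX.
have max_initial := initial_of_maxrank rk_mono rk_no_loops rk_setT HX.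
split => [lt_r | eq_r not_initial]; apply: vanish.
  by apply: leq_trans lt_r _; rewrite leq_add2r.
have s_lt_max : (#|flats_of X| < maxrank X)%N.
  rewrite ltn_neqAle s_le_max andbT eq_sym.
  by apply: contra not_initial => /eqP.
by rewrite -eq_r ltn_add2r.
Qed.
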